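(* Let $S^\star\subseteq S$. Then $S^\star$ generates $\mathcal{J}$ (as a two-sided ideal of $\mathcal{A}$) if and only if for every upper prime $U$ and every lower prime $D$ there exist words $U'\sim U$ and $D'\sim D$ such that either $U'D'-D'U'\in S^\star$ or $D'U'-U'D'\in S^\star$.
   Context: $\mathcal{A}$ is the free associative $\mathbb{C}$-algebra on noncommuting generators $L,R$; words are finite products of these letters. A word is balanced if it contains equally many $L$'s and $R$'s. $S=\{FG-GF : F,G \text{ nonempty balanced words}\}$ and $\mathcal{J}$ is the two-sided ideal generated by $S$. For words $X,Y$, $X\sim Y$ means $X-Y\in\mathcal{J}$. A word is prime if it is nonempty, balanced, and cannot be written as a product of two nonempty balanced words. For a balanced word $W=a_1\cdots a_n$, $e_k(W)=\sum_{i=1}^k\overline{a_i}$ ($0\le k\le n$) with $\overline{R}=1$, $\overline{L}=-1$. A prime $P$ of length $n$ is an upper prime if $e_k(P)>0$ for $1\le k\le n-1$, and a lower prime if $e_k(P)<0$ for $1\le k\le n-1$. *)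

(* The free associative C-algebra C<L,R> is modelled as the
   monoid algebra {malg C[word]} (multinomials' monalg) over the free monoid
   of words in two letters; C is the genuine field of complex numbers,
   built as (Stdlib R)[i] (mathcomp-real-closed's complex over the real
   closed field structure on Stdlib's reals from mathcomp-analysis' Rstruct). *)
From HB Require Import structures.
From mathcomp Require Import all_boot all_order all_algebra.
From mathcomp Require Import complex.
From mathcomp Require Import Rstruct.
From mathcomp.multinomials Require Import monalg.
From Stdlib Require Import Rdefinitions.

Set Implicit Arguments.
Unset Strict Implicit.
Unset Printing Implicit Defensive.

Import GRing.Theory Num.Theory.
Local Open Scope ring_scope.

Definition Cx : Type := complex Rdefinitions.R.


Inductive letter := Lt | Rt.

Definition letter_to_bool (a : letter) : bool := if a is Rt then true else false.
Definition bool_to_letter (b : bool) : letter := if b then Rt else Lt.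
Lemma letter_boolK : cancel letter_to_bool bool_to_letter.
Proof. by case. Qed.
HB.instance Definition _ := Countable.copy letter (can_type letter_boolK).

Definition word := seq letter.
HB.instance Definition _ := Countable.on word.

Lemma word_unitm (x y : word) : x ++ y = [::] -> x = [::] /\ y = [::].
Proof. by case: x => [|? ?] //; case: y. Qed.

HB.instance Definition _ := Choice_isMonomialDef.Build word
  (catA (T:=letter)) (@cat0s letter) (@cats0 letter) word_unitm.

Definition Alg := {malg Cx[word]}.
HB.instance Definition _ := GRing.Ring.on Alg.

Definition wA (w : word) : Alg := << w >>.

Definition lbar (a : letter) : int := if a is Rt then 1 else -1.

Definition ek (W : word) (k : nat) : int := \sum_(i < k) lbar (nth Lt W i).

Definition balanced (W : word) : bool := count_mem Lt W == count_mem Rt W.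

Definition prime_word (W : word) : Prop :=
  [/\ W != [::], balanced W &
      ~ exists U V : word, [/\ U != [::], V != [::], balanced U, balanced V
                              & W = U ++ V]].

Definition upper_prime (P : word) : Prop :=
  prime_word P /\ forall k : nat, (leq 1 k && leq k.+1 (size P)) -> 0 < ek P k.

Definition lower_prime (P : word) : Prop :=
  prime_word P /\ forall k : nat, (leq 1 k && leq k.+1 (size P)) -> ek P k < 0.

Definition Sgen (x : Alg) : Prop :=
  exists F G : word, [/\ F != [::], G != [::], balanced F, balanced G
                      & x = wA F * wA G - wA G * wA F].

Definition two_sided_ideal (I : Alg -> Prop) : Prop :=
  [/\ I 0, (forall x y, I x -> I y -> I (x - y)) &
      forall a x b, I x -> I (a * x * b)].

Definition ideal_gen (T : Alg -> Prop) (x : Alg) : Prop :=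
  forall I : Alg -> Prop, two_sided_ideal I -> (forall t, T t -> I t) -> I x.

Definition Jideal : Alg -> Prop := ideal_gen Sgen.

Definition wequiv (X Y : word) : Prop := Jideal (wA X - wA Y).

(* For T a set of commutators FG - GF and P a property of words
   such that P (u F G v) <-> P (u G F v) for each of them, the indicator of P
   extends linearly to A, and this functional vanishes on the ideal generated
   by T; so W - W' in that ideal and P W force P W'.  Taking for P the class
   of W under swaps of adjacent nonempty balanced factors shows that X ~ Y
   iff X and Y are related by such swaps.

   Sufficiency: by induction on |FG|, the swap FG -> GF is a chain of swaps
   from S*.  A non-prime factor splits into two smaller swaps; two upper (or
   two lower) primes are R F0 L and R G0 L, and FG -> GF reduces to swaps
   inside; an upper and a lower prime are replaced by the U' ~ U and D' ~ D
   of the hypothesis, whose shorter swap chains are realised by induction.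

   Necessity: if U, D admit no such U', D', the property "W = X Y with
   X ~ U upper-shaped and Y ~ D lower-shaped" is invariant under S*-swaps in
   any context: a swap with nonempty context happens inside X or inside Y,
   and a bare swap would exhibit a forbidden pair.  It holds for UD but not
   for DU, so UD - DU is not in the ideal generated by S*. *)

From mathcomp Require Import all_boot all_order all_algebra.
From mathcomp.multinomials Require Import monalg.
From mathcomp Require Import zify complex Rstruct.
From Stdlib Require Import Relations Classical ClassicalEpsilon.

Set Implicit Arguments.
Unset Strict Implicit.
Unset Printing Implicit Defensive.

Import Order.TTheory GRing.Theory Num.Theory.
Local Open Scope ring_scope.

Definition ht (w : word) : int := (count_mem Rt w)%:Z - (count_mem Lt w)%:Z.

Lemma ht_nil : ht [::] = 0.
Proof. by []. Qed.

Lemma ht_cat (x y : word) : ht (x ++ y) = ht x + ht y.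
Proof. rewrite /ht !count_cat !PoszD; lia. Qed.

Lemma ht_cons (c : letter) (w : word) : ht (c :: w) = lbar c + ht w.
Proof. by rewrite -cat1s ht_cat; case: c. Qed.

Lemma ht_rcons (w : word) (c : letter) : ht (rcons w c) = ht w + lbar c.
Proof. by rewrite -cats1 ht_cat; case: c. Qed.

Lemma balancedE (w : word) : balanced w = (ht w == 0).
Proof. rewrite /balanced /ht; apply/eqP/eqP; lia. Qed.

Lemma ek_ht (W : word) (k : nat) : (k <= size W)%N -> ek W k = ht (take k W).
Proof.
elim: k => [|k IHk] le_kW; first by rewrite /ek big_ord0 take0.
by rewrite /ek big_ord_recr /= -/(ek W k) IHk ?(ltnW le_kW) // (take_nth Lt le_kW) ht_rcons.
Qed.

Lemma size_gt0 (w : word) : w != [::] -> (0 < size w)%N.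
Proof. by case: w. Qed.

Definition inner (c : int) (Q : pred int) (w : word) : Prop :=
  forall k, (0 < k < size w)%N -> Q (c + ht (take k w)).

Lemma ek_inner (Q : pred int) (W : word) :
  (forall k, ((1 <= k) && (k.+1 <= size W))%N -> Q (ek W k)) <-> inner 0 Q W.
Proof.
split=> H k /[dup] /andP[_ /ltnW le_kW] Hk.
  by rewrite add0r -ek_ht //; apply: H.
by rewrite ek_ht //; have := H k Hk; rewrite add0r.
Qed.

Lemma inner_cat (c : int) (Q : pred int) (x y : word) : x != [::] -> y != [::] ->
  inner c Q (x ++ y) <-> [/\ inner c Q x, Q (c + ht x) & inner (c + ht x) Q y].
Proof.
move=> /size_gt0 x0 /size_gt0 y0; split.
- move=> H; split.
  + move=> k /andP[k0 kx]; have := H k; rewrite size_cat take_cat kx.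
    by apply; lia.
  + by have := H (size x); rewrite size_cat take_size_cat //; apply; lia.
  + move=> k /andP[k0 ky]; have := H (size x + k)%N.
    rewrite size_cat take_cat (ltnNge _ (size x)) leq_addr /= addKn ht_cat addrA.
    by apply; lia.
- case=> Hx Hxy Hy k /andP[k0]; rewrite size_cat take_cat => kxy.
  case: ltngtP => [kx|xk|<-]; first by apply: Hx; lia.
  + by rewrite ht_cat addrA; apply: Hy; lia.
  + by rewrite subnn take0 cats0.
Qed.

Lemma inner_cut (c : int) (Q : pred int) (x y : word) : x != [::] -> y != [::] ->
  inner c Q (x ++ y) -> Q (c + ht x).
Proof. by move=> x0 y0 /(@inner_cat c Q x y x0 y0) []. Qed.

Lemma cat_neq_nil (x y : word) : x != [::] -> x ++ y != [::].
Proof. by case: x. Qed.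

Lemma cat_eq_cat (T : Type) (x1 x2 y1 y2 : seq T) : x1 ++ x2 = y1 ++ y2 ->
  (exists m, y1 = x1 ++ m /\ x2 = m ++ y2) \/ (exists m, x1 = y1 ++ m /\ y2 = m ++ x2).
Proof.
elim: x1 y1 => [|a x1 IH] [|b y1] /=; first by left; exists [::].
- by left; exists (b :: y1).
- by right; exists (a :: x1).
by case=> <- /IH [[m [-> ->]]|[m [-> ->]]]; [left|right]; exists m.
Qed.

Definition balanced_pair (F G : word) : Prop :=
  [/\ F != [::], G != [::], balanced F & balanced G].

Lemma inner_catC (c : int) (Q : pred int) (x y : word) : balanced_pair x y ->
  inner c Q (x ++ y) <-> inner c Q (y ++ x).
Proof.
case=> x0 y0; rewrite !balancedE => /eqP hx /eqP hy.
rewrite !inner_cat // hx hy addr0.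
by split=> -[]; split.
Qed.

Lemma inner_ctx (c : int) (Q : pred int) (a m m' b : word) :
  m != [::] -> m' != [::] -> ht m = ht m' -> (forall c', inner c' Q m <-> inner c' Q m') ->
  inner c Q (a ++ m ++ b) <-> inner c Q (a ++ m' ++ b).
Proof.
move=> m0 m'0 hm Hm.
have Hmb c' : inner c' Q (m ++ b) <-> inner c' Q (m' ++ b).
  have [->|b0] := eqVneq b [::]; first by rewrite !cats0.
  rewrite !inner_cat // hm.
  by split=> -[? ? ?]; split=> //; apply/Hm.
have [->|a0] := eqVneq a [::]; first exact: Hmb.
rewrite !(@inner_cat c Q a) ?cat_neq_nil //.
by split=> -[? ? ?]; split=> //; apply/Hmb.
Qed.

Lemma inner_swap (c : int) (Q : pred int) (a F G b : word) : balanced_pair F G ->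
  inner c Q (a ++ F ++ G ++ b) <-> inner c Q (a ++ G ++ F ++ b).
Proof.
move=> FG; case: (FG) => F0 G0 _ _.
rewrite (catA F G) (catA G F); apply: inner_ctx; rewrite ?cat_neq_nil //.
- by rewrite !ht_cat addrC.
- by move=> c'; apply: inner_catC.
Qed.

Definition opp_letter (c : letter) : letter := if c is Rt then Lt else Rt.

Definition shaped (c : letter) (w : word) : Prop :=
  balanced w /\ inner 0 (fun z => 0 < lbar c * z) w.

Lemma shaped_swap (c : letter) (a F G b : word) : balanced_pair F G ->
  shaped c (a ++ F ++ G ++ b) -> shaped c (a ++ G ++ F ++ b).
Proof.
move=> FG [bal inn]; split; last exact/(inner_swap _ _ _ _ FG).
by move: bal; rewrite !balancedE !ht_cat [ht F + _]addrCA.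
Qed.

Lemma shaped_cut (c : letter) (x y : word) : shaped c (x ++ y) ->
  x != [::] -> y != [::] -> 0 < lbar c * ht x.
Proof. by move=> [_ inn] x0 y0; have := inner_cut x0 y0 inn; rewrite add0r. Qed.

Lemma shaped_wrapped (c : letter) (W : word) : shaped c W -> W != [::] ->
  exists2 W0, balanced W0 & W = c :: rcons W0 (opp_letter c).
Proof.
case: W => [//|c' W1] shW _; case/lastP: W1 shW => [[]|W0 d shW]; first by case: c'.
have first_step : 0 < lbar c * lbar c'.
  have := shaped_cut (x := [:: c']) shW isT; rewrite ht_cons ht_nil addr0.
  by apply; case: (W0).
have last_step : 0 < lbar c * (lbar c' + ht W0).
  by move: shW; rewrite -cats1 -cat_cons => /shaped_cut; rewrite ht_cons; apply.
move: shW => [+ _]; rewrite balancedE ht_cons ht_rcons => /eqP bal.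
exists W0.
  by rewrite balancedE; move: first_step last_step bal; case: c c' d => [] [] [] /=; lia.
by move: first_step last_step bal; case: c c' d => [] [] [] //=; lia.
Qed.

Lemma shaped_opp_nil (c : letter) (W : word) :
  shaped c W -> shaped (opp_letter c) W -> W = [::].
Proof.
move=> shW shW'; have [//|W0] := eqVneq W [::].
have [V _ EV] := shaped_wrapped shW W0; have [V' _] := shaped_wrapped shW' W0.
by rewrite EV; case: c {shW shW' EV}.
Qed.

Lemma shaped_cat_factor (F G X Y : word) : balanced_pair F G ->
  shaped Rt X -> shaped Lt Y -> F ++ G = X ++ Y -> F = X /\ G = Y.
Proof.
case=> F0 G0; rewrite !balancedE => /eqP hF _ shX shY /cat_eq_cat E.
case: E shX shY => [[m [-> ->]]|[m [EF ->]]] shX shY.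
  have [->|m0] := eqVneq m [::]; first by rewrite cats0.
  by exfalso; have := shaped_cut shX F0 m0; rewrite hF mulr0.
have [m0|m0] := eqVneq m [::]; first by rewrite EF m0 cats0.
exfalso; have := shaped_cut shY m0 G0; case: shX => + _; rewrite balancedE => /eqP hX.
by move: hF; rewrite EF ht_cat hX add0r => ->; rewrite mulr0.
Qed.

Lemma shaped_block (a m b X Y : word) : shaped Rt X -> shaped Lt Y -> balanced m ->
  (a != [::]) || (b != [::]) -> a ++ m ++ b = X ++ Y ->
  (exists b', X = a ++ m ++ b' /\ b = b' ++ Y) \/ (exists a', a = X ++ a' /\ Y = a' ++ m ++ b).
Proof.
move=> shX shY; rewrite balancedE => /eqP hm ab; rewrite catA.
case/cat_eq_cat=> [[n [EX Eb]]|[n [/cat_eq_cat [[p [EX Em]]|[p [Ea En]]] EY]]].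
- by left; exists n; rewrite EX -catA.
- have [p0|p0] := eqVneq p [::].
    by right; exists [::]; rewrite EX EY Em p0 !cats0.
  have [n0|n0] := eqVneq n [::].
    by left; exists [::]; rewrite EX EY Em n0 !cats0.
  (* the cut between X and Y falls strictly inside m = p ++ n *)
  exfalso; move: shX shY; rewrite EX EY => shX shY.
  have cutX : a != [::] -> 0 < ht a.
    by move=> a0; have := shaped_cut shX a0 p0; rewrite mul1r.
  have cutY : b != [::] -> ht n < 0.
    by move=> b0; have := shaped_cut shY n0 b0; rewrite mulN1r oppr_gt0.
  case: shX shY => + _ [+ _]; rewrite !balancedE !ht_cat => /eqP hX /eqP hY.
  move: hm; rewrite Em ht_cat => hm.
  have [a0|a0] := eqVneq a [::]; have [b0|b0] := eqVneq b [::].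
  + by move: ab; rewrite a0 b0.
  + by move: hX (cutY b0); rewrite a0 ht_nil; lia.
  + by move: hY (cutX a0); rewrite b0 ht_nil; lia.
  + by move: (cutX a0) (cutY b0); lia.
- by right; exists p; rewrite EY En -catA.
Qed.

Lemma prime_inner_neq0 (P : word) : prime_word P -> inner 0 (fun z => z != 0) P.
Proof.
case=> _ balP noSplit k /andP[k0 kP]; rewrite add0r; apply/eqP => hk; apply: noSplit.
exists (take k P), (drop k P); split; last by rewrite cat_take_drop.
- by apply/eqP => /(congr1 size); rewrite size_take kP /=; lia.
- by apply/eqP => /(congr1 size); rewrite size_drop /=; lia.
- by rewrite balancedE hk.
- by move: balP; rewrite !balancedE -[P in ht P](cat_take_drop k) ht_cat hk add0r.
Qed.

Lemma inner_neq0_sign (c : letter) (W : word) :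
  inner 0 (fun z => z != 0) (c :: W) -> inner 0 (fun z => 0 < lbar c * z) (c :: W).
Proof.
(* heights move by 1 at each letter, so a height that never vanishes keeps its sign *)
move=> H; elim=> [//|k IHk] /andP[_ kW].
have [-> | k0] := posnP k; first by rewrite /= take0 ht_cons ht_nil; case: (c).
have := IHk (introT andP (conj k0 (ltnW kW))); have := H k.+1 (introT andP (conj isT kW)).
rewrite (take_nth Lt (ltnW kW)) ht_rcons.
by case: (c) (nth Lt (c :: W) k) => [] [] /=; lia.
Qed.

Lemma prime_shaped (P : word) : prime_word P -> exists c, shaped c P.
Proof.
move=> pP; have := prime_inner_neq0 pP.
by case: P pP => [[]//|c W] [_ balP _] /inner_neq0_sign; exists c.
Qed.

Lemma upper_primeE (P : word) : upper_prime P <-> prime_word P /\ shaped Rt P.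
Proof.
split=> -[pP H]; split=> //.
  split; first by case: pP.
  by apply/ek_inner => k /H; rewrite [lbar Rt]/= mul1r.
by case: H => _ /(iffRL (ek_inner _ _)) H k /H; rewrite [lbar Rt]/= mul1r.
Qed.

Lemma lower_primeE (P : word) : lower_prime P <-> prime_word P /\ shaped Lt P.
Proof.
split=> -[pP H]; split=> //.
  split; first by case: pP.
  by apply/ek_inner => k /H; rewrite [lbar Lt]/= mulN1r oppr_gt0.
by case: H => _ /(iffRL (ek_inner _ _)) H k /H; rewrite [lbar Lt]/= mulN1r oppr_gt0.
Qed.

Lemma prime_upper_or_lower (P : word) : prime_word P -> upper_prime P \/ lower_prime P.
Proof.
move=> pP; have [[] shP] := prime_shaped pP.
  by right; apply/lower_primeE.
by left; apply/upper_primeE.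
Qed.

Lemma nonprime_split (F : word) : F != [::] -> balanced F -> ~ prime_word F ->
  exists F1 F2, [/\ F1 != [::], F2 != [::], balanced F1, balanced F2 & F = F1 ++ F2].
Proof. by move=> F0 bF npF; apply: NNPP => nosplit; apply: npF. Qed.

Definition commw (F G : word) : Alg := wA F * wA G - wA G * wA F.

Lemma monalgUM (c d : Cx) (u v : word) :
  (<< c *g u >> : Alg) * << d *g v >> = << c * d *g (u ++ v) >>.
Proof. by rewrite malgM_def fgmulUU. Qed.

Lemma wA_cat (u v : word) : wA (u ++ v) = wA u * wA v.
Proof. by rewrite /wA monalgUM mulr1. Qed.

Lemma wA_cat3 (a m b : word) : wA (a ++ m ++ b) = wA a * wA m * wA b.
Proof. by rewrite !wA_cat mulrA. Qed.

Lemma commwE (F G : word) : commw F G = wA (F ++ G) - wA (G ++ F).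
Proof. by rewrite !wA_cat. Qed.

Definition linext (h : word -> Cx) (x : Alg) : Cx := mmap (@idfun Cx) h x.

Lemma AlgE (a : Alg) : a = \sum_(k <- finmap.enum_fset (msupp a)) (<< a@_k *g k >> : Alg).
Proof. exact: monalgE. Qed.

Lemma mulr_sum_sandwich (R : pzSemiRingType) (I J : Type) (r : seq I) (s : seq J)
    (A : I -> R) (B : J -> R) (x : R) :
  (\sum_(i <- r) A i) * x * (\sum_(j <- s) B j) = \sum_(i <- r) \sum_(j <- s) A i * x * B j.
Proof. by rewrite !mulr_suml; apply: eq_bigr => i _; rewrite mulr_sumr. Qed.

Lemma mulr_sandwichB (R : pzRingType) (a b x y : R) :
  a * (x - y) * b = a * x * b - a * y * b.
Proof. by rewrite mulrBr mulrBl. Qed.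

Lemma mulr_sandwichA (R : pzRingType) (a a' y b' b : R) :
  a * (a' * y * b') * b = a * a' * y * (b' * b).
Proof. by rewrite !mulrA. Qed.

Lemma linext0 (h : word -> Cx) : linext h 0 = 0.
Proof. by rewrite /linext raddf0. Qed.

Lemma linextB (h : word -> Cx) : {morph linext h : x y / x - y}.
Proof. by move=> x y; rewrite /linext raddfB. Qed.

Lemma linext_sum (h : word -> Cx) (I : Type) (r : seq I) (F : I -> Alg) :
  linext h (\sum_(i <- r) F i) = \sum_(i <- r) linext h (F i).
Proof. by rewrite /linext raddf_sum. Qed.

Lemma linext_sandwich (h : word -> Cx) (a b : Alg) (m : word) :
  linext h (a * wA m * b) = \sum_(u <- finmap.enum_fset (msupp a))
    \sum_(v <- finmap.enum_fset (msupp b)) a@_u * b@_v * h (u ++ m ++ v).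
Proof.
rewrite {1}(AlgE a) {1}(AlgE b) mulr_sum_sandwich linext_sum; apply: eq_bigr => u _.
rewrite linext_sum; apply: eq_bigr => v _.
by rewrite /wA !monalgUM /linext !mulr1 mmapU -catA.
Qed.

Lemma linext_commw (h : word -> Cx) (F G : word) (a b : Alg) :
  (forall u v, h (u ++ F ++ G ++ v) = h (u ++ G ++ F ++ v)) ->
  linext h (a * commw F G * b) = 0.
Proof.
move=> hFG; rewrite commwE mulr_sandwichB linextB; apply/eqP; rewrite subr_eq0; apply/eqP.
(* Not [rewrite !linext_sandwich]: matching its second instance would make
   unification unfold products in Alg, which is prohibitively slow. *)
apply: etrans (linext_sandwich _ _ _ _) _; apply: esym; apply: etrans (linext_sandwich _ _ _ _) _.
by apply: eq_bigr => u _; apply: eq_bigr => v _; rewrite -!catA hFG.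
Qed.

Lemma linext_ideal_gen (T : Alg -> Prop) (h : word -> Cx) :
  (forall t, T t -> forall a b, linext h (a * t * b) = 0) ->
  forall x, ideal_gen T x -> linext h x = 0.
Proof.
move=> hT x Tx; pose I (y : Alg) := forall a b : Alg, linext h (a * y * b) = 0.
have idI : two_sided_ideal I.
  split=> [a b|y z hy hz a b|a' y b' hy a b]; first by rewrite mulr0 mul0r linext0.
    rewrite mulr_sandwichB linextB.
    exact: etrans (f_equal2 (fun p q => p - q) (hy a b) (hz a b)) (subrr 0).
  by rewrite mulr_sandwichA hy.
by have := Tx I idI hT 1 1; rewrite mul1r mulr1.
Qed.

Lemma linext_wA (h : word -> Cx) (w : word) : linext h (wA w) = h w.
Proof. by rewrite /linext /wA mmapU mul1r. Qed.

Definition indicator (P : word -> Prop) (w : word) : Cx :=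
  if excluded_middle_informative (P w) then 1 else 0.

Lemma indicator1 (P : word -> Prop) (w : word) : P w -> indicator P w = 1.
Proof. by rewrite /indicator; case: excluded_middle_informative. Qed.

Lemma indicator0 (P : word -> Prop) (w : word) : ~ P w -> indicator P w = 0.
Proof. by rewrite /indicator; case: excluded_middle_informative. Qed.

Lemma indicator_iff (P : word -> Prop) (w w' : word) :
  (P w <-> P w') -> indicator P w = indicator P w'.
Proof.
move=> Pww'; have [Pw|nPw] := classic (P w).
  by rewrite !indicator1 //; apply/Pww'.
by rewrite !indicator0 // => /Pww'.
Qed.

Lemma ideal_gen_invariant (T : Alg -> Prop) (P : word -> Prop) :
  (forall t, T t -> exists F G,
     t = commw F G /\ forall u v, P (u ++ F ++ G ++ v) <-> P (u ++ G ++ F ++ v)) ->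
  forall W W', ideal_gen T (wA W - wA W') -> P W -> P W'.
Proof.
move=> hT W W' TW PW; apply: NNPP => nPW'.
have hP t : T t -> forall a b, linext (indicator P) (a * t * b) = 0.
  by case/hT=> F [G [-> PFG]] a b; apply: linext_commw => u v; apply: indicator_iff.
have := linext_ideal_gen hP TW; rewrite linextB.
rewrite (_ : linext _ (wA W) - _ = 1 - 0).
  by rewrite subr0 => /eqP; rewrite oner_eq0.
by congr (_ - _); rewrite linext_wA; [apply: indicator1 | apply: indicator0].
Qed.

Lemma ideal_gen_ideal (T : Alg -> Prop) : two_sided_ideal (ideal_gen T).
Proof.
split=> [I [] //|x y Tx Ty I idI TI|a x b Tx I idI TI]; case: (idI) => _ idB idM.
  by apply: idB; [apply: Tx | apply: Ty].
by apply: idM; apply: Tx.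
Qed.

Lemma ideal_gen_sub (T : Alg -> Prop) (t : Alg) : T t -> ideal_gen T t.
Proof. by move=> Tt I _; apply. Qed.

Definition swap_step (P : word -> word -> Prop) (W W' : word) : Prop :=
  exists a F G b, [/\ P F G, W = a ++ F ++ G ++ b & W' = a ++ G ++ F ++ b].

Definition swap_equiv (P : word -> word -> Prop) : relation word :=
  clos_refl_sym_trans word (swap_step P).

Section SwapEquiv.
Variable P : word -> word -> Prop.

Lemma swap_equiv_refl (W : word) : swap_equiv P W W.
Proof. exact: rst_refl. Qed.

Lemma swap_equiv_sym (W W' : word) : swap_equiv P W W' -> swap_equiv P W' W.
Proof. exact: rst_sym. Qed.

Lemma swap_equiv_trans (W1 W2 W3 : word) :
  swap_equiv P W1 W2 -> swap_equiv P W2 W3 -> swap_equiv P W1 W3.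
Proof. exact: rst_trans. Qed.

Lemma swap_equiv_swap (F G : word) : P F G -> swap_equiv P (F ++ G) (G ++ F).
Proof. by move=> PFG; apply: rst_step; exists [::], F, G, [::]; rewrite !cats0. Qed.

Lemma swap_equiv_ctx (a b W W' : word) :
  swap_equiv P W W' -> swap_equiv P (a ++ W ++ b) (a ++ W' ++ b).
Proof.
elim=> {W W'} [W W' [a' [F [G [b' [PFG -> ->]]]]]|W|W W' _|W1 W2 W3 _ IH12 _].
- by apply: rst_step; exists (a ++ a'), F, G, (b' ++ b); rewrite !catA.
- exact: swap_equiv_refl.
- exact: swap_equiv_sym.
- exact: swap_equiv_trans.
Qed.

Lemma swap_equiv_cat (X X' Y Y' : word) :
  swap_equiv P X X' -> swap_equiv P Y Y' -> swap_equiv P (X ++ Y) (X' ++ Y').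
Proof.
move=> XX' YY'; apply: (@swap_equiv_trans _ (X' ++ Y)).
  by have := swap_equiv_ctx [::] Y XX'.
by have := swap_equiv_ctx X' [::] YY'; rewrite !cats0.
Qed.

Lemma swap_equiv_size (W W' : word) : swap_equiv P W W' -> size W = size W'.
Proof.
elim=> {W W'} [W W' [a [F [G [b [_ -> ->]]]]]|//|W W' _ ->|W1 W2 W3 _ -> _ ->] //.
by rewrite !size_cat [(size F + _)%N]addnCA.
Qed.

End SwapEquiv.

Lemma swap_equiv_ideal_gen (T : Alg -> Prop) (P : word -> word -> Prop) (W W' : word) :
  (forall F G, P F G -> T (commw F G)) ->
  swap_equiv P W W' -> ideal_gen T (wA W - wA W').
Proof.
move=> PT; case: (ideal_gen_ideal T) => id0 idB idM.
elim=> {W W'} [W W' [a [F [G [b [PFG -> ->]]]]]|W|W W' _|W1 W2 W3 _ IH12 _ IH23].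
- have -> : wA (a ++ F ++ G ++ b) - wA (a ++ G ++ F ++ b) = wA a * commw F G * wA b.
    by rewrite commwE mulr_sandwichB; congr (_ - _); rewrite -wA_cat3 -catA.
  by apply: idM; apply: ideal_gen_sub; apply: PT.
- by rewrite subrr.
- by move=> TW; rewrite -opprB -sub0r; apply: idB.
- have := idB _ _ IH12 (idB _ _ id0 IH23).
  by rewrite sub0r opprK addrA subrK.
Qed.

Lemma wequiv_swap_equiv (W W' : word) : wequiv W W' <-> swap_equiv balanced_pair W W'.
Proof.
split=> [JW|]; last by apply: swap_equiv_ideal_gen => F G [F0 G0 bF bG]; exists F, G.
apply: (ideal_gen_invariant (P := swap_equiv balanced_pair W) _ JW (swap_equiv_refl _ W)).
move=> t [F [G [F0 G0 bF bG ->]]]; exists F, G; split=> // u v.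
have := swap_equiv_ctx u v (@swap_equiv_swap balanced_pair F G (And4 F0 G0 bF bG)).
rewrite -!catA => step.
by split=> WW; [apply: swap_equiv_trans WW step | apply: swap_equiv_trans WW (swap_equiv_sym step)].
Qed.

Definition swaps_pair (Sstar : Alg -> Prop) (U D : word) : Prop :=
  exists U' D' : word, [/\ wequiv U' U, wequiv D' D &
    Sstar (commw U' D') \/ Sstar (commw D' U')].

Definition swaps_primes (Sstar : Alg -> Prop) : Prop :=
  forall U D : word, upper_prime U -> lower_prime D -> swaps_pair Sstar U D.

Section Factorization.
Variables U D : word.

Definition factorization (W : word) : Prop :=
  exists X Y, [/\ W = X ++ Y, swap_equiv balanced_pair X U,
                  swap_equiv balanced_pair Y D, shaped Rt X & shaped Lt Y].

Lemma factorization_swap (a F G b : word) : balanced_pair F G ->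
  (a != [::]) || (b != [::]) ->
  factorization (a ++ F ++ G ++ b) -> factorization (a ++ G ++ F ++ b).
Proof.
move=> FG ab [X [Y [E XU YD shX shY]]]; case: (FG) => F0 G0 bF bG.
have bFG : balanced (F ++ G) by move: bF bG; rewrite !balancedE ht_cat => /eqP-> /eqP->.
have back c d : swap_equiv balanced_pair (c ++ G ++ F ++ d) (c ++ F ++ G ++ d).
  by have := swap_equiv_ctx c d (@swap_equiv_swap balanced_pair G F (And4 G0 F0 bG bF));
    rewrite -!catA.
move: E; rewrite (catA F) => /(shaped_block shX shY bFG ab) [[b' [EX ->]]|[a' [-> EY]]].
- move: EX; rewrite -catA => EX; exists (a ++ G ++ F ++ b'), Y; split=> //.
  + by rewrite -!catA.
  + by apply: swap_equiv_trans XU; rewrite EX; apply: back.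
  + by apply: shaped_swap FG _; rewrite -EX.
- move: EY; rewrite -catA => EY; exists X, (a' ++ G ++ F ++ b); split=> //.
  + by rewrite -!catA.
  + by apply: swap_equiv_trans YD; rewrite EY; apply: back.
  + by apply: shaped_swap FG _; rewrite -EY.
Qed.

Lemma factorization_cat (F G : word) : balanced_pair F G -> factorization (F ++ G) ->
  [/\ swap_equiv balanced_pair F U, swap_equiv balanced_pair G D, shaped Rt F & shaped Lt G].
Proof.
by move=> FG [X [Y [E XU YD shX shY]]]; have [-> ->] := shaped_cat_factor FG shX shY E.
Qed.

Lemma factorization_invariant (Sstar : Alg -> Prop) :
  (forall x, Sstar x -> Sgen x) -> ~ swaps_pair Sstar U D ->
  forall t, Sstar t -> exists F G, t = commw F G /\
    forall u v, factorization (u ++ F ++ G ++ v) <-> factorization (u ++ G ++ F ++ v).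
Proof.
move=> HS noswap t St; have [F [G [F0 G0 bF bG Et]]] := HS t St.
exists F, G; split=> // u v.
have [uv|] := boolP ((u != [::]) || (v != [::])).
  by split; apply: factorization_swap.
rewrite negb_or !negbK => /andP[/eqP-> /eqP->]; rewrite /= !cats0.
split=> [/(factorization_cat (And4 F0 G0 bF bG))|/(factorization_cat (And4 G0 F0 bG bF))].
  case=> FU GD _ _; exfalso; apply: noswap; exists F, G.
  by split; [apply/wequiv_swap_equiv.. | left; rewrite /commw -Et].
case=> GU FD _ _; exfalso; apply: noswap; exists G, F.
by split; [apply/wequiv_swap_equiv.. | right; rewrite /commw -Et].
Qed.

End Factorization.

Lemma generating_swaps_primes (Sstar : Alg -> Prop) : (forall x, Sstar x -> Sgen x) ->
  (forall x, ideal_gen Sstar x <-> Jideal x) -> swaps_primes Sstar.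
Proof.
move=> HS genS U D upU loD; apply: NNPP => noswap.
have [[U0 bU _] shU] := iffLR (upper_primeE U) upU.
have [[D0 bD _] shD] := iffLR (lower_primeE D) loD.
have JUD : ideal_gen Sstar (wA (U ++ D) - wA (D ++ U)).
  by apply/genS; rewrite -commwE; apply: ideal_gen_sub; exists U, D.
have UD : factorization U D (U ++ D) by exists U, D; split=> //; apply: swap_equiv_refl.
have := ideal_gen_invariant (factorization_invariant HS noswap) JUD UD.
case/(factorization_cat (And4 D0 U0 bD bU)) => _ _ shDR _.
by move: D0; rewrite (shaped_opp_nil shD shDR).
Qed.

Definition swappable (P : word -> word -> Prop) (n : nat) : Prop :=
  forall F G, balanced F -> balanced G -> (size (F ++ G) <= n)%N ->
    swap_equiv P (F ++ G) (G ++ F).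

Section Swappable.
Variables (P : word -> word -> Prop) (n : nat).
Hypothesis swP : swappable P n.

Lemma swap_equiv_lift (W W' : word) :
  swap_equiv balanced_pair W W' -> (size W <= n)%N -> swap_equiv P W W'.
Proof.
elim=> {W W'} [W W' [a [F [G [b [[_ _ bF bG] -> ->]]]]]|W|W W' WW' IH|W1 W2 W3 W12 IH12 _ IH23] sW.
- have := swap_equiv_ctx a b (swP bF bG _); rewrite -!catA; apply.
  by move: sW; rewrite !size_cat; lia.
- exact: swap_equiv_refl.
- by apply/swap_equiv_sym/IH; rewrite (swap_equiv_size WW').
- by apply: swap_equiv_trans (IH12 sW) (IH23 _); rewrite -(swap_equiv_size W12).
Qed.

Lemma swap_equiv_catl (F1 F2 G : word) : balanced F1 -> balanced F2 -> balanced G ->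
  (size (F1 ++ G) <= n)%N -> (size (F2 ++ G) <= n)%N ->
  swap_equiv P ((F1 ++ F2) ++ G) (G ++ F1 ++ F2).
Proof.
move=> bF1 bF2 bG s1 s2; apply: (@swap_equiv_trans _ _ (F1 ++ G ++ F2)).
  by have := swap_equiv_ctx F1 [::] (swP bF2 bG s2); rewrite !cats0 -catA.
by have := swap_equiv_ctx [::] F2 (swP bF1 bG s1); rewrite -!catA.
Qed.

Lemma swap_equiv_catr (F G1 G2 : word) : balanced F -> balanced G1 -> balanced G2 ->
  (size (F ++ G1) <= n)%N -> (size (F ++ G2) <= n)%N ->
  swap_equiv P (F ++ G1 ++ G2) ((G1 ++ G2) ++ F).
Proof.
move=> bF bG1 bG2 s1 s2; apply/swap_equiv_sym/swap_equiv_catl => //.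
  by rewrite size_cat addnC -size_cat.
by rewrite size_cat addnC -size_cat.
Qed.

Lemma swap_equiv_shaped (c : letter) (F G : word) : shaped c F -> shaped c G ->
  F != [::] -> G != [::] -> (size (F ++ G) <= n.+1)%N -> swap_equiv P (F ++ G) (G ++ F).
Proof.
move=> /shaped_wrapped shF /shaped_wrapped shG /shF[F0 bF0 ->] /shG[G0 bG0 ->] sFG.
move: sFG; rewrite size_cat /= !size_rcons => sFG.
set d := opp_letter c; have bdc : balanced [:: d; c] by rewrite /d; case: (c).
(* (c F0 d)(c G0 d) = c (F0 (d c G0)) d: move F0 past d c G0, then d c past G0 *)
have -> : c :: rcons F0 d ++ c :: rcons G0 d = [:: c] ++ (F0 ++ [:: d; c] ++ G0) ++ [:: d].
  by rewrite -!cats1 /= -!catA.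
have -> : c :: rcons G0 d ++ c :: rcons F0 d = [:: c] ++ ((G0 ++ [:: d; c]) ++ F0) ++ [:: d].
  by rewrite -!cats1 /= -!catA.
apply: swap_equiv_ctx; apply: swap_equiv_trans (swP bF0 _ _) _.
- by move: bdc bG0; rewrite !balancedE ht_cat => /eqP-> /eqP->.
- by rewrite !size_cat /=; lia.
- apply: swap_equiv_cat (swap_equiv_refl _ _); apply: swP => //.
  by rewrite size_cat /=; lia.
Qed.

End Swappable.

Section Sufficiency.
Variable Sstar : Alg -> Prop.
Hypothesis swapsS : swaps_primes Sstar.
Local Notation Sswap := (fun F G => Sstar (commw F G)).

Lemma swap_equiv_upper_lower (n : nat) (U D : word) : swappable Sswap n ->
  upper_prime U -> lower_prime D -> (size (U ++ D) <= n.+1)%N ->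
  swap_equiv Sswap (U ++ D) (D ++ U).
Proof.
move=> swP upU loD sUD.
have [U' [D' [/wequiv_swap_equiv UU /wequiv_swap_equiv DD SUD]]] := swapsS upU loD.
have [[U0 _ _] _] := upU; have [[D0 _ _] _] := loD.
have liftU : swap_equiv Sswap U' U.
  apply: (swap_equiv_lift swP UU); rewrite (swap_equiv_size UU).
  by move: sUD (size_gt0 D0); rewrite size_cat; lia.
have liftD : swap_equiv Sswap D' D.
  apply: (swap_equiv_lift swP DD); rewrite (swap_equiv_size DD).
  by move: sUD (size_gt0 U0); rewrite size_cat; lia.
apply: swap_equiv_trans (swap_equiv_cat (swap_equiv_sym liftU) (swap_equiv_sym liftD)) _.
apply: swap_equiv_trans (swap_equiv_cat liftD liftU).
by case: SUD => S; [apply: swap_equiv_swap | apply/swap_equiv_sym/swap_equiv_swap].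
Qed.

Lemma swappable_succ (n : nat) : swappable Sswap n -> swappable Sswap n.+1.
Proof.
move=> swP F G bF bG sFG.
have [->|F0] := eqVneq F [::]; first by rewrite cats0; apply: swap_equiv_refl.
have [->|G0] := eqVneq G [::]; first by rewrite cats0; apply: swap_equiv_refl.
have sF := size_gt0 F0; have sG := size_gt0 G0.
have [pF|/(nonprime_split F0 bF)[F1 [F2 [F10 F20 bF1 bF2 EF]]]] := classic (prime_word F); last first.
  have := size_gt0 F10; have := size_gt0 F20; move: sFG; rewrite EF !size_cat => *.
  by apply: (swap_equiv_catl swP) => //; rewrite size_cat; lia.
have [pG|/(nonprime_split G0 bG)[G1 [G2 [G10 G20 bG1 bG2 EG]]]] := classic (prime_word G); last first.
  have := size_gt0 G10; have := size_gt0 G20; move: sFG; rewrite EG !size_cat => *.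
  by apply: (swap_equiv_catr swP) => //; rewrite size_cat; lia.
case: (prime_upper_or_lower pF) (prime_upper_or_lower pG) => [upF|loF] [upG|loG].
- by apply: (@swap_equiv_shaped _ _ swP Rt) => //; [case/upper_primeE: upF | case/upper_primeE: upG].
- exact: swap_equiv_upper_lower swP upF loG sFG.
- by apply/swap_equiv_sym/(swap_equiv_upper_lower swP upG loF); rewrite size_cat addnC -size_cat.
- by apply: (@swap_equiv_shaped _ _ swP Lt) => //; [case/lower_primeE: loF | case/lower_primeE: loG].
Qed.

Lemma swappable_all (n : nat) : swappable Sswap n.
Proof.
elim: n => [F G _ _|n /swappable_succ //].
by rewrite size_cat leqn0 addn_eq0 !size_eq0 => /andP[/eqP-> /eqP->]; apply: swap_equiv_refl.
Qed.

End Sufficiency.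

Lemma swaps_primes_generating (Sstar : Alg -> Prop) : (forall x, Sstar x -> Sgen x) ->
  swaps_primes Sstar -> forall x, ideal_gen Sstar x <-> Jideal x.
Proof.
move=> HS swS x; split=> Ix; apply: Ix; first exact: ideal_gen_ideal.
- by move=> t /HS; apply: ideal_gen_sub.
- exact: ideal_gen_ideal.
move=> t [F [G [_ _ bF bG ->]]]; rewrite -/(commw F G) commwE.
apply: (@swap_equiv_ideal_gen _ (fun F G => Sstar (commw F G))) => //.
exact: (swappable_all swS bF bG (leqnn _)).
Qed.

Theorem proposition5p7 (Sstar : Alg -> Prop) (HS : forall x, Sstar x -> Sgen x) :
  (forall x : Alg, ideal_gen Sstar x <-> Jideal x) <->
  (forall U D : word, upper_prime U -> lower_prime D ->
     exists U' D' : word, [/\ wequiv U' U, wequiv D' D &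
       (Sstar (wA U' * wA D' - wA D' * wA U') \/
        Sstar (wA D' * wA U' - wA U' * wA D'))]).
Proof.
split; [exact: generating_swaps_primes | exact: swaps_primes_generating].
Qed.
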